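(* Fix $a\in(1/2,1)$. There exist constants $c_a>0$ and $k_a$ (depending only on $a$) such that for all integers $k\ge k_a$, all $\varepsilon\in(0,1)$ and all $\delta\in(0,1/4)$, the $(\varepsilon,\delta)$-sample complexity of estimating the power sum $P_a(\vec p)=\sum_{i=1}^k p_i^a$ over $\Delta_k$ satisfies \[ C_{P_a}(\varepsilon,\delta)\ge c_a\,\log\frac1\delta\cdot\frac{k^{2-2a}}{\varepsilon^2}. \]
   Context: $\Delta_k$ is the set of probability distributions $\vec p=(p_1,\dots,p_k)$ on $[k]=\{1,\dots,k\}$; $\log$ is the natural logarithm. An estimator is any map $\hat f:[k]^*\to\mathbb{R}$ from finite sequences over $[k]$. For a property $f:\Delta_k\to\mathbb{R}$, the $(\varepsilon,\delta)$-sample complexity is \[ C_f(\varepsilon,\delta):=\min_{\hat f}\min\{n:\ \Pr_{X^n\sim\vec p}(|\hat f(X^n)-f(\vec p)|>\varepsilon)\le\delta\ \ \forall\vec p\in\Delta_k\}, \] where $X^n$ denotes $n$ i.i.d. samples from $\vec p$. *)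

From Stdlib Require Import Reals Lra List.
Import ListNotations.
Open Scope R_scope.

(* Symbols of [k] = {1,...,k} are encoded as the naturals 0,...,k-1. *)

(* A probability distribution on [k]: p i for i < k (values for i >= k are irrelevant). *)
Definition in_simplex (k : nat) (p : nat -> R) : Prop :=
  (forall i, (i < k)%nat -> 0 <= p i) /\
  fold_right Rplus 0 (map p (seq 0 k)) = 1.

(* x^a for x >= 0 with the convention 0^a = 0 (a > 0). *)
Definition rpow (x a : R) : R := if Rlt_dec 0 x then Rpower x a else 0.

Definition power_sum (a : R) (k : nat) (p : nat -> R) : R :=
  fold_right Rplus 0 (map (fun i => rpow (p i) a) (seq 0 k)).

Fixpoint all_seqs (k n : nat) : list (list nat) :=
  match n with
  | O => [ [] ]
  | S m => flat_map (fun i => map (cons i) (all_seqs k m)) (seq 0 k)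
  end.

Definition seq_prob (p : nat -> R) (x : list nat) : R :=
  fold_right (fun i acc => p i * acc) 1 x.

Definition fail_prob (k n : nat) (p : nat -> R) (fhat : list nat -> R)
  (f : (nat -> R) -> R) (eps : R) : R :=
  fold_right Rplus 0
    (map (fun x => if Rlt_dec eps (Rabs (fhat x - f p)) then seq_prob p x else 0)
         (all_seqs k n)).

(* C_f(eps,delta) is the least such n; "C_f(eps,delta) >= B" is equivalent to
   "every n with achievable n satisfies n >= B". *)
Definition achievable (k : nat) (f : (nat -> R) -> R) (eps delta : R) (n : nat) : Prop :=
  exists fhat : list nat -> R,
    forall p, in_simplex k p -> fail_prob k n p fhat f eps <= delta.

(* Le Cam's two-point method, in its high-probability form.  If an estimator is
   eps-accurate with probability 1 - delta under both p and q, while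
   |P_a(q) - P_a(p)| > 2 eps, then the event "the estimate is eps-close to P_a(p)"
   has probability at least 1 - delta under p^n and at most delta under q^n; by a
   two-cell variational bound on KL this forces n KL(p || q) >= ln(1/delta) / 4.

   The hard pair lives on masses u = 1/(2k): p gives mass u to the first
   floor(k/2) symbols, 3u to the next floor(k/2) and 2u to the rest, and q moves
   mass 2su from each heavy symbol to a light one.  Since x |-> x^a is strictly
   concave for a < 1, the marginal gain at u beats the loss at 3u, so P_a moves by
   order s k^(1-a), whereas KL(p || q) = O(s^2).  Taking s of order eps k^(a-1)
   gives the bound. *)

From Stdlib Require Import Reals Lra Lia List.
Import ListNotations.
Open Scope R_scope.

Definition sum_over {A : Type} (L : list A) (f : A -> R) : R :=
  fold_right Rplus 0 (map f L).

Section SumOver.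
Context {A : Type}.
Implicit Types (L : list A) (f g : A -> R).

Lemma sum_over_nil f : sum_over [] f = 0.
Proof. reflexivity. Qed.

Lemma sum_over_cons x L f : sum_over (x :: L) f = f x + sum_over L f.
Proof. reflexivity. Qed.

Lemma sum_over_ext L f g : (forall x, f x = g x) -> sum_over L f = sum_over L g.
Proof.
  intros Hfg; induction L as [|x L IH]; rewrite ?sum_over_nil, ?sum_over_cons;
    [|rewrite Hfg, IH]; reflexivity.
Qed.

Lemma sum_over_le L f g : (forall x, f x <= g x) -> sum_over L f <= sum_over L g.
Proof.
  intros Hfg; induction L as [|x L IH]; rewrite ?sum_over_nil, ?sum_over_cons; [lra|].
  specialize (Hfg x); lra.
Qed.

Lemma sum_over_nonneg L f : (forall x, 0 <= f x) -> 0 <= sum_over L f.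
Proof.
  intros Hf; induction L as [|x L IH]; rewrite ?sum_over_nil, ?sum_over_cons; [lra|].
  specialize (Hf x); lra.
Qed.

Lemma sum_over_plus L f g : sum_over L (fun x => f x + g x) = sum_over L f + sum_over L g.
Proof. induction L as [|x L IH]; rewrite ?sum_over_nil, ?sum_over_cons; [|rewrite IH]; lra. Qed.

Lemma sum_over_scal L c f : sum_over L (fun x => c * f x) = c * sum_over L f.
Proof. induction L as [|x L IH]; rewrite ?sum_over_nil, ?sum_over_cons; [|rewrite IH]; lra. Qed.

Lemma sum_over_scal_r L f c : sum_over L (fun x => f x * c) = sum_over L f * c.
Proof. induction L as [|x L IH]; rewrite ?sum_over_nil, ?sum_over_cons; [|rewrite IH]; lra. Qed.

Lemma sum_over_app L1 L2 f : sum_over (L1 ++ L2) f = sum_over L1 f + sum_over L2 f.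
Proof.
  induction L1 as [|x L1 IH]; simpl app; rewrite ?sum_over_nil, ?sum_over_cons;
    [|rewrite IH]; lra.
Qed.

End SumOver.

Lemma sum_over_flat_map {A B : Type} (L : list A) (g : A -> list B) (f : B -> R) :
  sum_over (flat_map g L) f = sum_over L (fun x => sum_over (g x) f).
Proof.
  induction L as [|x L IH]; simpl flat_map; rewrite ?sum_over_nil, ?sum_over_cons;
    [|rewrite sum_over_app, IH]; reflexivity.
Qed.

Lemma sum_over_map {A B : Type} (L : list A) (h : A -> B) (f : B -> R) :
  sum_over (map h L) f = sum_over L (fun x => f (h x)).
Proof. unfold sum_over; rewrite map_map; reflexivity. Qed.

Lemma sum_over_seq_const s len (f : nat -> R) c :
  (forall i, (s <= i < s + len)%nat -> f i = c) -> sum_over (seq s len) f = INR len * c.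
Proof.
  revert s; induction len as [|len IH]; intros s Hf; simpl seq;
    rewrite ?sum_over_nil, ?sum_over_cons; [simpl; lra|].
  rewrite (IH (S s)), Hf, S_INR; [ring | lia |].
  intros i Hi; apply Hf; lia.
Qed.

Lemma sum_over_all_seqs_S k n (f : list nat -> R) :
  sum_over (all_seqs k (S n)) f
  = sum_over (seq 0 k) (fun i => sum_over (all_seqs k n) (fun x => f (i :: x))).
Proof.
  simpl; rewrite sum_over_flat_map; apply sum_over_ext; intros i; apply sum_over_map.
Qed.

Lemma seq_prob_pos (p : nat -> R) x : (forall i, 0 < p i) -> 0 < seq_prob p x.
Proof. intros Hp; induction x as [|i x IH]; simpl; [lra|]. specialize (Hp i); nra. Qed.

Lemma sum_seq_prob k n p : sum_over (seq 0 k) p = 1 -> sum_over (all_seqs k n) (seq_prob p) = 1.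
Proof.
  intros Hp; induction n as [|n IH]; [unfold sum_over; simpl; ring|].
  rewrite sum_over_all_seqs_S, <- Hp; apply sum_over_ext; intros i.
  simpl seq_prob; rewrite sum_over_scal, IH; ring.
Qed.

Lemma ln_div x y : 0 < x -> 0 < y -> ln (x / y) = ln x - ln y.
Proof. intros Hx Hy; unfold Rdiv; rewrite ln_mult, ln_Rinv; auto with real. Qed.

Lemma ln_le_sub_1 y : 0 < y -> ln y <= y - 1.
Proof. intros Hy; pose proof (exp_ineq1_le (ln y)) as H; rewrite exp_ln in H by exact Hy; lra. Qed.

Lemma mul_ln_ratio_ge P Q w : 0 < P -> 0 < Q -> 0 < w ->
  P * (1 + ln w) - w * Q <= P * ln (P / Q).
Proof.
  intros HP HQ Hw.
  assert (HwQ : 0 < w * Q) by (apply Rmult_lt_0_compat; assumption).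
  pose proof (ln_le_sub_1 (w * Q / P) ltac:(apply Rdiv_lt_0_compat; assumption)) as Hln.
  rewrite ln_div, ln_mult in Hln by assumption; rewrite ln_div by assumption.
  apply (Rmult_le_compat_l P) in Hln; [|lra].
  replace (P * (w * Q / P - 1)) with (w * Q - P) in Hln by (field; lra); lra.
Qed.

Lemma mul_ln_ratio_le x y : 0 < x -> 0 < y -> x * ln (x / y) <= x * (x / y - 1).
Proof.
  intros Hx Hy; apply Rmult_le_compat_l; [lra|].
  apply ln_le_sub_1, Rdiv_lt_0_compat; assumption.
Qed.

Lemma one_le_ln_inv delta : 0 < delta < 1/4 -> 1 <= ln (1 / delta).
Proof.
  intros Hd; rewrite <- (ln_exp 1) at 1; left; apply ln_increasing; [apply exp_pos|].
  pose proof exp_le_3; apply Rlt_le_trans with 4; [lra|].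
  apply (Rmult_le_reg_r delta); [lra|]; unfold Rdiv; rewrite Rmult_assoc, Rinv_l; lra.
Qed.

Lemma Rpower_sub_ge x y a : 0 < x -> 0 < y -> 0 <= a ->
  a * Rpower x a * (y - x) / y <= Rpower y a - Rpower x a.
Proof.
  intros Hx Hy Ha.
  assert (Hratio : (y - x) / y <= ln (y / x)).
  { pose proof (ln_le_sub_1 (x / y) (Rdiv_lt_0_compat _ _ Hx Hy)) as H.
    rewrite ln_div in H |- * by assumption.
    replace ((y - x) / y) with (1 - x / y) by (field; lra); lra. }
  assert (Hy_pow : Rpower y a = Rpower x a * exp (a * ln (y / x))).
  { unfold Rpower; rewrite <- exp_plus, ln_div by assumption; f_equal; ring. }
  pose proof (exp_ineq1_le (a * ln (y / x))).
  assert (Hxa : 0 < Rpower x a) by apply exp_pos.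
  rewrite Hy_pow.
  replace (a * Rpower x a * (y - x) / y) with (Rpower x a * (a * ((y - x) / y))) by (field; lra).
  replace (Rpower x a * exp (a * ln (y / x)) - Rpower x a)
    with (Rpower x a * (exp (a * ln (y / x)) - 1)) by ring.
  apply Rmult_le_compat_l; [lra|].
  assert (a * ((y - x) / y) <= a * ln (y / x)) by (apply Rmult_le_compat_l; assumption).
  lra.
Qed.

Lemma rpow_pos x a : 0 < x -> rpow x a = Rpower x a.
Proof. intros Hx; unfold rpow; destruct (Rlt_dec 0 x); [reflexivity | lra]. Qed.

Lemma Rpower_INR_eventually_ge b M : 0 < b ->
  exists N : nat, forall k, (N <= k)%nat -> M <= Rpower (INR k) b.
Proof.
  intros Hb; destruct (Rle_lt_dec M 0) as [HM|HM].
  - exists 0%nat; intros k _; left; apply Rle_lt_trans with 0; [exact HM | apply exp_pos].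
  - destruct (INR_archimed 1 (Rpower M (/ b)) ltac:(lra)) as [N HN].
    exists N; intros k Hk.
    assert (HMb : 0 < Rpower M (/ b)) by apply exp_pos.
    rewrite <- (Rpower_1 M) at 1 by exact HM.
    replace 1 with (/ b * b) by (field; lra); rewrite <- Rpower_mult.
    apply Rle_Rpower_l; [lra|]; split; [exact HMb|].
    apply le_INR in Hk; lra.
Qed.

Definition KL {A : Type} (L : list A) (p q : A -> R) : R :=
  sum_over L (fun x => p x * ln (p x / q x)).

Lemma KL_seq_prob k n p q : (forall i, 0 < p i) -> (forall i, 0 < q i) ->
  sum_over (seq 0 k) p = 1 ->
  KL (all_seqs k n) (seq_prob p) (seq_prob q) = INR n * KL (seq 0 k) p q.
Proof.
  intros Hp Hq Hsum; induction n as [|n IH].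
  - unfold KL, sum_over; simpl; rewrite Rdiv_1_r, ln_1; ring.
  - unfold KL at 1; rewrite sum_over_all_seqs_S.
    transitivity (sum_over (seq 0 k)
      (fun i => p i * ln (p i / q i) + p i * (INR n * KL (seq 0 k) p q))).
    + apply sum_over_ext; intros i.
      rewrite <- IH, <- (Rmult_1_r (p i * _)), <- (sum_seq_prob k n p Hsum).
      unfold KL; rewrite <- !sum_over_scal, <- sum_over_plus.
      apply sum_over_ext; intros x.
      pose proof (seq_prob_pos p x Hp); pose proof (seq_prob_pos q x Hq).
      pose proof (Hp i); pose proof (Hq i).
      simpl seq_prob; rewrite !ln_div, !ln_mult by (try apply Rmult_lt_0_compat; assumption); ring.
    + rewrite sum_over_plus, sum_over_scal_r, Hsum, S_INR; unfold KL; ring.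
Qed.

Definition mass {A : Type} (L : list A) (P : A -> R) (B : A -> bool) : R :=
  sum_over L (fun x => if B x then P x else 0).

Lemma mass_compl {A : Type} (L : list A) P B :
  mass L P B + mass L P (fun x : A => negb (B x)) = sum_over L P.
Proof.
  unfold mass; rewrite <- sum_over_plus; apply sum_over_ext; intros x.
  destruct (B x); simpl; ring.
Qed.

(* Donsker-Varadhan with the two-valued test function [ln w1] on [B], [ln w2] off [B]. *)
Lemma KL_ge_two_cells {A : Type} (L : list A) (P Q : A -> R) (B : A -> bool) w1 w2 :
  (forall x, 0 < P x) -> (forall x, 0 < Q x) -> 0 < w1 -> 0 < w2 ->
  mass L P B * (1 + ln w1) - w1 * mass L Q B
  + mass L P (fun x => negb (B x)) * (1 + ln w2) - w2 * mass L Q (fun x => negb (B x))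
  <= KL L P Q.
Proof.
  intros HP HQ Hw1 Hw2; unfold mass, KL.
  induction L as [|x L IH]; rewrite ?sum_over_nil, ?sum_over_cons; [lra|].
  pose proof (mul_ln_ratio_ge (P x) (Q x) w1 (HP x) (HQ x) Hw1).
  pose proof (mul_ln_ratio_ge (P x) (Q x) w2 (HP x) (HQ x) Hw2).
  destruct (B x); simpl negb; lra.
Qed.

Lemma two_cell_bound delta PA PB QA QB :
  0 < delta < 1/4 -> PA + PB = 1 -> QA + QB = 1 -> PB <= delta -> QA <= delta ->
  0 <= QA -> 0 <= QB ->
  ln (1 / delta) / 4
  <= PB * (1 + ln delta) - delta * QB + PA * (1 + ln (PA / delta)) - PA / delta * QA.
Proof.
  intros Hd HPsum HQsum HPB HQA HQA0 HQB0.
  set (Ld := ln (1 / delta)).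
  assert (HLd : 1 <= Ld) by (apply one_le_ln_inv; exact Hd).
  assert (Hlnd : ln delta = - Ld).
  { unfold Ld, Rdiv; rewrite Rmult_1_l, ln_Rinv by lra; ring. }
  assert (HPA : 0 < PA) by lra.
  rewrite ln_div, Hlnd by lra.
  assert (HPAln : PA - 1 <= PA * ln PA).
  { pose proof (ln_le_sub_1 (/ PA) ltac:(apply Rinv_0_lt_compat; lra)) as H.
    rewrite ln_Rinv in H by lra; apply (Rmult_le_compat_l PA) in H; [|lra].
    replace (PA * (/ PA - 1)) with (1 - PA) in H by (field; lra); lra. }
  assert (PA / delta * QA <= PA).
  { replace (PA / delta * QA) with (PA * (QA / delta)) by (field; lra).
    rewrite <- (Rmult_1_r PA) at 2; apply Rmult_le_compat_l; [lra|].
    apply (Rmult_le_reg_r delta); [lra|]; unfold Rdiv; rewrite Rmult_assoc, Rinv_l; lra. }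
  assert (delta * QB <= delta) by nra.
  assert (PB * Ld <= delta * Ld) by nra.
  assert ((1 - 2 * delta) * Ld - delta >= Ld / 4) by nra.
  nra.
Qed.

Lemma two_point_lower_bound k (f : (nat -> R) -> R) eps delta n p q :
  0 < delta < 1/4 -> (forall i, 0 < p i) -> (forall i, 0 < q i) ->
  in_simplex k p -> in_simplex k q -> 2 * eps < Rabs (f q - f p) ->
  achievable k f eps delta n ->
  ln (1 / delta) / 4 <= INR n * KL (seq 0 k) p q.
Proof.
  intros Hd Hp Hq Hinp Hinq Hsep [fhat Hfhat].
  set (L := all_seqs k n); set (P := seq_prob p); set (Q := seq_prob q).
  set (B x := if Rlt_dec eps (Rabs (fhat x - f p)) then true else false).
  set (Bc x := negb (B x)).
  assert (HP : forall x, 0 < P x) by (intros; apply seq_prob_pos, Hp).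
  assert (HQ : forall x, 0 < Q x) by (intros; apply seq_prob_pos, Hq).
  assert (HPsum : mass L P B + mass L P Bc = 1).
  { rewrite mass_compl; exact (sum_seq_prob k n p (proj2 Hinp)). }
  assert (HQsum : mass L Q Bc + mass L Q B = 1).
  { rewrite Rplus_comm, mass_compl; exact (sum_seq_prob k n q (proj2 Hinq)). }
  assert (HPB : mass L P B <= delta).
  { eapply Rle_trans; [|exact (Hfhat p Hinp)]; right; apply sum_over_ext; intros x.
    unfold B; destruct (Rlt_dec _ _); reflexivity. }
  assert (HQBc : mass L Q Bc <= delta).
  { eapply Rle_trans; [|exact (Hfhat q Hinq)]; apply sum_over_le; intros x.
    unfold Bc, B; destruct (Rlt_dec eps (Rabs (fhat x - f p))) as [_|Hnear]; simpl negb.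
    - destruct (Rlt_dec _ _); [left; apply HQ | lra].
    - destruct (Rlt_dec eps (Rabs (fhat x - f q))) as [_|Hnear']; [unfold Q; lra|].
      exfalso; revert Hnear Hnear' Hsep; unfold Rabs; repeat destruct Rcase_abs; lra. }
  assert (HQ0 : forall C, 0 <= mass L Q C).
  { intros C; apply sum_over_nonneg; intros x; destruct (C x); [left; apply HQ | lra]. }
  assert (Hdelta : 0 < delta) by lra.
  assert (HPBc : 0 < mass L P Bc) by lra.
  pose proof (KL_ge_two_cells L P Q B delta (mass L P Bc / delta) HP HQ Hdelta
    ltac:(apply Rdiv_lt_0_compat; assumption)) as HKL.
  pose proof (two_cell_bound delta (mass L P Bc) (mass L P B) (mass L Q Bc) (mass L Q B)
    Hd ltac:(lra) ltac:(lra) HPB HQBc (HQ0 Bc) (HQ0 B)) as Hlow.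
  rewrite <- KL_seq_prob by (apply Hp || apply Hq || exact (proj2 Hinp)).
  fold L P Q Bc in HKL |- *; lra.
Qed.

Definition three_level (m : nat) (x y z : R) (i : nat) : R :=
  if (i <? m)%nat then x else if (i <? 2 * m)%nat then y else z.

Lemma sum_over_three_level k m x y z : (2 * m <= k)%nat ->
  sum_over (seq 0 k) (three_level m x y z)
  = INR m * x + INR m * y + (INR k - 2 * INR m) * z.
Proof.
  intros Hk; replace k with (m + (m + (k - 2 * m)))%nat at 1 by lia.
  rewrite !seq_app, !sum_over_app, (sum_over_seq_const 0 m _ x),
    (sum_over_seq_const (0 + m) m _ y), (sum_over_seq_const (0 + m + m) _ _ z),
    minus_INR, mult_INR by first [lia | intros i Hi; unfold three_level;
      destruct (Nat.ltb_spec i m), (Nat.ltb_spec i (2 * m)); first [reflexivity | lia]].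
  simpl; ring.
Qed.

Lemma sum_over_map_three_level (g : R -> R) k m x y z : (2 * m <= k)%nat ->
  sum_over (seq 0 k) (fun i => g (three_level m x y z i))
  = INR m * g x + INR m * g y + (INR k - 2 * INR m) * g z.
Proof.
  intros Hk; rewrite <- sum_over_three_level by exact Hk; apply sum_over_ext; intros i.
  unfold three_level; destruct (i <? m)%nat, (i <? 2 * m)%nat; reflexivity.
Qed.

Lemma sum_over_map2_three_level (g : R -> R -> R) k m x y z x' y' z' : (2 * m <= k)%nat ->
  sum_over (seq 0 k) (fun i => g (three_level m x y z i) (three_level m x' y' z' i))
  = INR m * g x x' + INR m * g y y' + (INR k - 2 * INR m) * g z z'.
Proof.
  intros Hk; rewrite <- sum_over_three_level by exact Hk; apply sum_over_ext; intros i.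
  unfold three_level; destruct (i <? m)%nat, (i <? 2 * m)%nat; reflexivity.
Qed.

Definition base_mass (k : nat) : R := / (2 * INR k).

Definition perturbed (k : nat) (s : R) : nat -> R :=
  three_level (k / 2) (base_mass k * (1 + 2 * s)) (base_mass k * (3 - 2 * s))
    (2 * base_mass k).

Lemma double_half_le k : (2 * (k / 2) <= k)%nat.
Proof. apply Nat.Div0.mul_div_le. Qed.

Lemma base_mass_pos k : (0 < k)%nat -> 0 < base_mass k.
Proof. intros Hk; apply Rinv_0_lt_compat, Rmult_lt_0_compat; [lra | apply lt_0_INR, Hk]. Qed.

Lemma perturbed_pos k s : (0 < k)%nat -> -1/2 < s < 3/2 -> forall i, 0 < perturbed k s i.
Proof.
  intros Hk Hs i; pose proof (base_mass_pos k Hk).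
  unfold perturbed, three_level; destruct (i <? k / 2)%nat, (i <? 2 * (k / 2))%nat; nra.
Qed.

Lemma perturbed_in_simplex k s : (0 < k)%nat -> -1/2 < s < 3/2 -> in_simplex k (perturbed k s).
Proof.
  intros Hk Hs; split; [intros i _; left; apply perturbed_pos; assumption|].
  change (sum_over (seq 0 k) (perturbed k s) = 1).
  unfold perturbed; rewrite sum_over_three_level by apply double_half_le.
  pose proof (lt_0_INR _ Hk); unfold base_mass; field; lra.
Qed.

Lemma KL_perturbed_le k s : (0 < k)%nat -> 0 <= s <= 1/8 ->
  KL (seq 0 k) (perturbed k 0) (perturbed k s) <= 2 * s ^ 2.
Proof.
  intros Hk Hs; unfold KL, perturbed.
  rewrite (sum_over_map2_three_level (fun x y => x * ln (x / y))) by apply double_half_le.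
  set (m := (k / 2)%nat); set (u := base_mass k).
  assert (Hu : 0 < u) by (apply base_mass_pos, Hk).
  assert (Hmu : 0 <= INR m * u <= 1/4).
  { pose proof (pos_INR m); pose proof (le_INR _ _ (double_half_le k)) as H2m.
    rewrite mult_INR in H2m; fold m in H2m; replace (INR 2) with 2 in H2m by (simpl; lra).
    pose proof (lt_0_INR _ Hk); unfold u, base_mass; split.
    - apply Rmult_le_pos; [lra | left; apply Rinv_0_lt_compat; lra].
    - apply (Rmult_le_reg_r (2 * INR k)); [lra|].
      rewrite Rmult_assoc, Rinv_l by lra; lra. }
  replace (u * (1 + 2 * 0)) with u by ring; replace (u * (3 - 2 * 0)) with (3 * u) by ring.
  replace (2 * u / (2 * u)) with 1 by (field; lra); rewrite ln_1, !Rmult_0_r, Rplus_0_r.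
  pose proof (mul_ln_ratio_le u (u * (1 + 2 * s)) ltac:(nra) ltac:(nra)).
  pose proof (mul_ln_ratio_le (3 * u) (u * (3 - 2 * s)) ltac:(nra) ltac:(nra)).
  set (X := 16 * s ^ 2 / ((1 + 2 * s) * (3 - 2 * s))).
  assert (Hchi2 : u * (u / (u * (1 + 2 * s)) - 1) + 3 * u * (3 * u / (u * (3 - 2 * s)) - 1)
                = u * X) by (unfold X; field; lra).
  assert (HX : X <= 6 * s ^ 2).
  { apply (Rmult_le_reg_r ((1 + 2 * s) * (3 - 2 * s))); [nra|].
    unfold X, Rdiv; rewrite Rmult_assoc, Rinv_l by nra; nra. }
  apply Rle_trans with (INR m * u * X).
  { rewrite <- Rmult_plus_distr_l, (Rmult_assoc (INR m)), <- Hchi2.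
    apply Rmult_le_compat_l; [apply pos_INR | lra]. }
  apply Rle_trans with (1 / 4 * (6 * s ^ 2)); [|nra].
  assert (0 <= X)
    by (unfold X, Rdiv; apply Rmult_le_pos; [nra | left; apply Rinv_0_lt_compat; nra]).
  apply Rmult_le_compat; lra.
Qed.

Lemma power_sum_perturbed a k s : (0 < k)%nat -> -1/2 < s < 3/2 ->
  power_sum a k (perturbed k s)
  = INR (k / 2) * Rpower (base_mass k * (1 + 2 * s)) a
    + INR (k / 2) * Rpower (base_mass k * (3 - 2 * s)) a
    + (INR k - 2 * INR (k / 2)) * Rpower (2 * base_mass k) a.
Proof.
  intros Hk Hs; pose proof (base_mass_pos k Hk).
  change (power_sum a k (perturbed k s))
    with (sum_over (seq 0 k) (fun i => rpow (perturbed k s i) a)).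
  unfold perturbed; rewrite (sum_over_map_three_level (fun x => rpow x a))
    by apply double_half_le.
  rewrite !rpow_pos by nra; reflexivity.
Qed.

Lemma one_le_Rpower_3 a : 0 <= a -> 1 <= Rpower 3 a.
Proof. intros Ha; rewrite <- (Rpower_O 3) by lra; apply Rle_Rpower; lra. Qed.

Lemma Rpower_3_lt_3 a : a < 1 -> Rpower 3 a < 3.
Proof.
  intros Ha; apply Rlt_le_trans with (Rpower 3 1); [apply Rpower_lt; lra|].
  rewrite Rpower_1; lra.
Qed.

Definition gap_coef (a s : R) : R := 1 / (1 + 2 * s) - Rpower 3 a / (3 - 2 * s).

Lemma gap_coef_ge a s : 0 <= a <= 1 -> 0 <= s <= (3 - Rpower 3 a) / 16 ->
  (3 - Rpower 3 a) / 8 <= gap_coef a s.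
Proof.
  intros Ha Hs.
  pose proof (one_le_Rpower_3 a (proj1 Ha)).
  assert (Rpower 3 a <= 3).
  { apply Rle_trans with (Rpower 3 1); [apply Rle_Rpower; lra | rewrite Rpower_1; lra]. }
  assert (Hden : 0 < (1 + 2 * s) * (3 - 2 * s) <= 4) by nra.
  unfold gap_coef.
  replace (1 / (1 + 2 * s) - Rpower 3 a / (3 - 2 * s))
    with (((3 - Rpower 3 a) - 2 * s * (1 + Rpower 3 a)) / ((1 + 2 * s) * (3 - 2 * s)))
    by (field; lra).
  apply (Rmult_le_reg_r ((1 + 2 * s) * (3 - 2 * s))); [lra|].
  unfold Rdiv at 2; rewrite Rmult_assoc, Rinv_l by lra; nra.
Qed.

Lemma power_sum_perturbed_gap a k s : 0 <= a -> (0 < k)%nat -> 0 <= s < 3/2 ->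
  INR (k / 2) * (2 * a * s * Rpower (base_mass k) a * gap_coef a s)
  <= power_sum a k (perturbed k s) - power_sum a k (perturbed k 0).
Proof.
  intros Ha Hk Hs.
  rewrite !power_sum_perturbed by (assumption || lra).
  set (u := base_mass k); assert (Hu : 0 < u) by apply base_mass_pos, Hk.
  replace (u * (1 + 2 * 0)) with u by ring; replace (u * (3 - 2 * 0)) with (3 * u) by ring.
  pose proof (Rpower_sub_ge u (u * (1 + 2 * s)) a Hu ltac:(nra) Ha) as Hlight.
  pose proof (Rpower_sub_ge (3 * u) (u * (3 - 2 * s)) a ltac:(lra) ltac:(nra) Ha) as Hheavy.
  rewrite <- (Rpower_mult_distr 3 u a) in Hheavy by lra.
  assert (Hfirst_order :
    a * Rpower u a * (u * (1 + 2 * s) - u) / (u * (1 + 2 * s))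
    + a * (Rpower 3 a * Rpower u a) * (u * (3 - 2 * s) - 3 * u) / (u * (3 - 2 * s))
    = 2 * a * s * Rpower u a * gap_coef a s).
  { unfold gap_coef; field; nra. }
  rewrite <- (Rpower_mult_distr 3 u a) by lra.
  pose proof (pos_INR (k / 2)).
  assert (Hsum : 2 * a * s * Rpower u a * gap_coef a s
    <= Rpower (u * (1 + 2 * s)) a - Rpower u a
       + (Rpower (u * (3 - 2 * s)) a - Rpower 3 a * Rpower u a)) by lra.
  apply (Rmult_le_compat_l (INR (k / 2))) in Hsum; [lra | assumption].
Qed.

Lemma INR_mul_Rpower_base_mass k a : (0 < k)%nat ->
  INR k * Rpower (base_mass k) a = Rpower 2 (- a) * Rpower (INR k) (1 - a).
Proof.
  intros Hk; pose proof (lt_0_INR _ Hk).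
  unfold base_mass, Rpower; rewrite ln_Rinv, ln_mult by lra.
  rewrite <- (exp_ln (INR k)) at 1 by lra; rewrite <- !exp_plus; f_equal; ring.
Qed.

Definition gap_const (a : R) : R := a * (3 - Rpower 3 a) / 12 * Rpower 2 (- a).

Lemma gap_const_pos a : 0 < a < 1 -> 0 < gap_const a.
Proof.
  intros Ha; pose proof (Rpower_3_lt_3 a (proj2 Ha)); pose proof (exp_pos (- a * ln 2)).
  unfold gap_const, Rpower at 2; apply Rmult_lt_0_compat; [|assumption].
  apply Rdiv_lt_0_compat; nra.
Qed.

Lemma power_sum_gap a k s : 0 < a < 1 -> (3 <= k)%nat -> 0 <= s <= (3 - Rpower 3 a) / 16 ->
  s * gap_const a * Rpower (INR k) (1 - a)
  <= power_sum a k (perturbed k s) - power_sum a k (perturbed k 0).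
Proof.
  intros Ha Hk Hs.
  pose proof (one_le_Rpower_3 a ltac:(lra)).
  pose proof (power_sum_perturbed_gap a k s ltac:(lra) ltac:(lia) ltac:(lra)) as Hgap.
  pose proof (gap_coef_ge a s ltac:(lra) Hs) as Hcoef.
  assert (Hhalf : INR k / 3 <= INR (k / 2)).
  { assert (Hk3 : (k <= 3 * (k / 2))%nat).
    { pose proof (Nat.div_mod_eq k 2); pose proof (Nat.mod_upper_bound k 2); lia. }
    apply le_INR in Hk3; rewrite mult_INR in Hk3; replace (INR 3) with 3 in Hk3 by (simpl; lra).
    lra. }
  assert (HU : 0 < Rpower (base_mass k) a) by apply exp_pos.
  eapply Rle_trans; [|exact Hgap].
  replace (s * gap_const a * Rpower (INR k) (1 - a))
    with (INR k / 3 * (2 * a * s * Rpower (base_mass k) a * ((3 - Rpower 3 a) / 8))).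
  - assert (0 <= 2 * a * s * Rpower (base_mass k) a)
      by (repeat apply Rmult_le_pos; lra).
    pose proof (pos_INR k).
    apply Rmult_le_compat; [lra | apply Rmult_le_pos; lra | lra |].
    apply Rmult_le_compat_l; assumption.
  - unfold gap_const.
    transitivity (s * (a * (3 - Rpower 3 a) / 12) * (Rpower 2 (- a) * Rpower (INR k) (1 - a)));
      [rewrite <- INR_mul_Rpower_base_mass by lia; field | ring].
Qed.

Lemma sample_size_ge_perturbed a k eps delta n s :
  0 < a < 1 -> (3 <= k)%nat -> 0 < delta < 1/4 -> 0 < s <= (3 - Rpower 3 a) / 16 ->
  2 * eps < s * gap_const a * Rpower (INR k) (1 - a) ->
  achievable k (power_sum a k) eps delta n ->
  ln (1 / delta) / (8 * s ^ 2) <= INR n.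
Proof.
  intros Ha Hk Hd Hs Hsep Hach.
  pose proof (one_le_Rpower_3 a ltac:(lra)).
  assert (Hk0 : (0 < k)%nat) by lia.
  pose proof (power_sum_gap a k s Ha Hk ltac:(lra)) as Hgap.
  pose proof (two_point_lower_bound k (power_sum a k) eps delta n (perturbed k 0) (perturbed k s)
    Hd (perturbed_pos k 0 Hk0 ltac:(lra)) (perturbed_pos k s Hk0 ltac:(lra))
    (perturbed_in_simplex k 0 Hk0 ltac:(lra)) (perturbed_in_simplex k s Hk0 ltac:(lra))
    ltac:(eapply Rlt_le_trans; [|apply Rle_abs]; lra) Hach) as Hlow.
  pose proof (KL_perturbed_le k s Hk0 ltac:(lra)) as HKL.
  pose proof (pos_INR n).
  apply (Rmult_le_reg_r (8 * s ^ 2)); [nra|].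
  unfold Rdiv; rewrite Rmult_assoc, Rinv_l by nra; nra.
Qed.

Theorem theorem2 (a : R) (Ha : 1/2 < a < 1) :
  exists (c : R) (ka : nat), 0 < c /\
    forall (k : nat) (eps delta : R) (n : nat),
      (ka <= k)%nat -> 0 < eps < 1 -> 0 < delta < 1/4 ->
      achievable k (power_sum a k) eps delta n ->
      c * ln (1 / delta) * Rpower (INR k) (2 - 2 * a) / eps ^ 2 <= INR n.
Proof.
  set (G := gap_const a); assert (HG : 0 < G) by (apply gap_const_pos; lra).
  set (smax := (3 - Rpower 3 a) / 16).
  assert (Hsmax : 0 < smax) by (pose proof (Rpower_3_lt_3 a ltac:(lra)); unfold smax; lra).
  destruct (Rpower_INR_eventually_ge (1 - a) (3 / (G * smax)) ltac:(lra)) as [N HN].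
  exists (G ^ 2 / 72), (Nat.max N 3); split; [apply Rdiv_lt_0_compat; [apply pow_lt|]; lra|].
  intros k eps delta n Hk Heps Hd Hach.
  set (Rk := Rpower (INR k) (1 - a)); assert (HRk0 : 0 < Rk) by apply exp_pos.
  assert (HRk : 3 <= smax * (G * Rk)).
  { specialize (HN k ltac:(lia)); fold Rk in HN; apply (Rmult_le_compat_l (G * smax)) in HN; [|nra].
    replace (G * smax * (3 / (G * smax))) with 3 in HN by (field; lra); lra. }
  set (s := 3 * eps / (G * Rk)).
  assert (Hscale : s * G * Rk = 3 * eps) by (unfold s; field; nra).
  assert (Hs : 0 < s <= smax) by (split; [unfold s; apply Rdiv_lt_0_compat|]; nra).
  pose proof (sample_size_ge_perturbed a k eps delta n s ltac:(lra) ltac:(lia) Hd Hs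
    ltac:(fold G Rk; lra) Hach) as Hn.
  replace (2 - 2 * a) with ((1 - a) + (1 - a)) by ring; rewrite Rpower_plus; fold Rk.
  replace (G ^ 2 / 72 * ln (1 / delta) * (Rk * Rk) / eps ^ 2)
    with (ln (1 / delta) / (8 * s ^ 2)) by (unfold s; field; lra).
  exact Hn.
Qed.
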